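(* Let $k\ge2$, $1\le\nu\le k-1$, $d\ge2$, $\delta\in\mathbb{C}^*$, and let \[ S(z_1,\dots,z_k)=\big(z_2,\dots,z_k,\ \delta(z_{k-\nu+1}^d-z_1)\big) \] be the shift-like automorphism of $\mathbb{C}^k$ of type $\nu$ and degree $d$, with positive Green's function \[ G^+(z)=\lim_{n\to\infty}\frac1{d^n}\log^+\|S^{\nu n}(z)\|. \] For $R>0$ and $1\le i\le k$ let $V_i=\{z\in\mathbb{C}^k:\|z\|_\infty=|z_i|\ge R\}$, $V_R=\overline{\Delta^k(0;R)}$, $V_R^+=\bigcup_{i=k-\nu+1}^kV_i$ and $V_R^-=\bigcup_{i=1}^{k-\nu}V_i$. Then for every $c>0$ there exists $R>0$ such that $G^+(z)\ge c$ for every $z\in V_R^+$; i.e. $\{z\in\mathbb{C}^k:G^+(z)<c\}\subset V_R\cup V_R^-$.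
   Context: $\|z\|_\infty=\max_i|z_i|$, $\log^+t=\max(\log t,0)$, $S^m$ is the $m$-th iterate of $S$, and $\Delta^k(0;R)$ is the polydisc of polyradius $(R,\dots,R)$ centered at $0$. *)

From HB Require Import structures.
From mathcomp Require Import all_boot all_order all_algebra.
From mathcomp Require Import all_classical all_reals all_analysis.
From mathcomp Require Import complex.
Set Implicit Arguments. Unset Strict Implicit. Unset Printing Implicit Defensive.
Import Order.TTheory GRing.Theory Num.Theory.
Import numFieldNormedType.Exports.
Local Open Scope ring_scope.
Local Open Scope complex_scope.
Local Open Scope classical_set_scope.

Definition cabs (R : realType) (z : R[i]) : R := Normc.normc z.

(* coordinate j (0-based) of z : C^k, 0 out of range *)
Definition coord (R : realType) (k : nat) (z : 'rV[R[i]]_k) (j : nat) : R[i] :=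
  match @insub nat (fun j => j < k)%N 'I_k j with Some i => z 0 i | None => 0 end.

(* shift-like map (0-based indices):
   S(z)_i = z_{i+1} for i < k-1, S(z)_{k-1} = delta (z_{k-nu}^d - z_0) *)
Definition shift_like (R : realType) (k nu d : nat) (delta : R[i])
  (z : 'rV[R[i]]_k) : 'rV[R[i]]_k :=
  \row_(i < k) (if (i.+1 < k)%N then coord z i.+1
                else delta * (coord z (k - nu) ^+ d - coord z 0)).

Definition supnorm (R : realType) (k : nat) (z : 'rV[R[i]]_k) : R :=
  \big[Num.max/0]_(i < k) cabs (z 0 i).

Definition logplus (R : realType) (t : R) : R := Num.max (ln t) 0.

Definition Gplus (R : realType) (k nu d : nat) (delta : R[i])
  (z : 'rV[R[i]]_k) : R :=
  lim ((fun n : nat => (d%:R ^+ n)^-1 *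
          logplus (supnorm (iter (nu * n) (shift_like nu d delta) z))) @ \oo).

(* V_R^+ = union of V_i, i = k-nu+1..k (1-based), i.e. 0-based k-nu <= i < k,
   where V_i = { z : ||z||_oo = |z_i| >= R } *)
Definition VRplus (R : realType) (k nu : nat) (r : R) : set 'rV[R[i]]_k :=
  [set z | exists i : 'I_k, (k - nu <= i)%N /\
             supnorm z = cabs (z 0 i) /\ r <= cabs (z 0 i)].

From Pilot Require Import Defs.
From HB Require Import structures.
From mathcomp Require Import all_boot all_order all_algebra.
From mathcomp Require Import all_classical all_reals all_analysis.
From mathcomp Require Import complex.
From mathcomp Require Import zify ring lra.
Set Implicit Arguments. Unset Strict Implicit. Unset Printing Implicit Defensive.
Import Order.TTheory GRing.Theory Num.Theory.
Import numFieldNormedType.Exports.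
Local Open Scope ring_scope.
Local Open Scope complex_scope.
Local Open Scope classical_set_scope.

Local Notation coord := Defs.coord.

(* On V_R^+ the largest coordinate is one of the last nu, and S^nu replaces each of
   these z_p by delta (z_p^d - z_(p+nu-k)) while shifting the others.  For R large
   this keeps the largest coordinate among the last nu and makes ||S^nu z|| equal to
   ||z||^d up to the factors |delta|/2 and 1 + 2|delta|.  Hence L_n = ln ||S^(nu n) z||
   satisfies |L_(n+1) - d L_n| <= B, so L_n / d^n converges to G^+(z), and the limit is
   at least L_0 - B/(d-1) >= ln R - B/(d-1), which exceeds c for R large. *)

Section Modulus.
Variable R : realType.
Implicit Types x y : R[i].

Lemma cabs_ge0 x : 0 <= cabs x.
Proof. by case: x => a b; exact: sqrtr_ge0. Qed.

Lemma cabs_gt0 x : x != 0 -> 0 < cabs x.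
Proof.
by move=> x0; rewrite lt_def cabs_ge0 andbT; apply: contra x0 => /eqP/Normc.eq0_normc ->.
Qed.

Lemma cabsM x y : cabs (x * y) = cabs x * cabs y.
Proof. exact: Normc.normcM. Qed.

Lemma cabsX x n : cabs (x ^+ n) = cabs x ^+ n.
Proof.
elim: n => [|n IH]; first by rewrite !expr0 /cabs Normc.normc1.
by rewrite !exprS cabsM IH.
Qed.

Lemma cabsB_le x y : cabs (x - y) <= cabs x + cabs y.
Proof. by rewrite -[cabs y](@normcN R); exact: le_normcD. Qed.

Lemma cabsB_ge x y : cabs x - cabs y <= cabs (x - y).
Proof. by rewrite lerBlDr; have := le_normcD (x - y) y; rewrite subrK. Qed.

End Modulus.

Lemma normr_lnB_le (R : realType) (a b x y : R) : 0 < a -> 0 < y ->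
  a * y <= x <= b * y -> `|ln x - ln y| <= `|ln a| + `|ln b|.
Proof.
move=> a0 y0 /andP[ax xb]; have x0 := lt_le_trans (mulr_gt0 a0 y0) ax.
have b0 : 0 < b by rewrite -(pmulr_lgt0 _ y0) (lt_le_trans x0).
have lo : ln a + ln y <= ln x by rewrite -lnM ?posrE // ler_ln ?posrE ?mulr_gt0.
have hi : ln x <= ln b + ln y by rewrite -lnM ?posrE // ler_ln ?posrE ?mulr_gt0.
have := ler_norm (ln b); have := ler_norm (- ln a); rewrite normrN.
have := normr_ge0 (ln a); have := normr_ge0 (ln b).
by rewrite ler_norml => *; apply/andP; split; lra.
Qed.

Section ScaledLimit.
Variables (R : realType) (D : R).

Lemma nondecreasing_scaled (u : R^nat) : 1 < D ->
  (forall n, D * u n <= u n.+1) ->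
  nondecreasing_seq (fun n => (D ^+ n)^-1 * u n).
Proof.
move=> D1 uD; apply/nondecreasing_seqP => n.
rewrite exprS invfM -mulrA mulrCA; apply: ler_wpM2l.
  by rewrite invr_ge0 exprn_ge0 //; lra.
by rewrite ler_pdivlMl ?uD //; lra.
Qed.

Lemma limn_scaled_ge (L : R^nat) (B : R) : 1 < D ->
  (forall n, `|L n.+1 - D * L n| <= B) ->
  L 0%N - B / (D - 1) <= limn (fun n => (D ^+ n)^-1 * L n).
Proof.
move=> D1 LB; set C := B / (D - 1); set e := fun n => (D ^+ n)^-1.
have B0 : 0 <= B := le_trans (normr_ge0 _) (LB 0%N).
have C0 : 0 <= C by apply: divr_ge0; lra.
(* D * C = B + C is what makes (L n - C) / D^n increase and (L n + C) / D^n decrease. *)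
have DC : D * C = B + C by rewrite /C; field; lra.
have e0 n : 0 <= e n by rewrite invr_ge0 exprn_ge0 //; lra.
have lo_nd : nondecreasing_seq (fun n => e n * (L n - C)).
  by apply: nondecreasing_scaled => // n; move: (LB n); rewrite ler_norml mulrBr DC; lra.
have hi_nd : nondecreasing_seq (fun n => e n * (- L n - C)).
  by apply: nondecreasing_scaled => // n; move: (LB n); rewrite ler_norml mulrBr mulrN DC; lra.
have lo_cvg : cvgn (fun n => e n * (L n - C)).
  apply: nondecreasing_is_cvgn lo_nd _; exists (L 0%N + C) => _ [n _ <-].
  have := hi_nd 0%N n (leq0n n); have := mulr_ge0 (e0 n) C0.
  by rewrite /e expr0 invr1 mul1r; lra.
have e_cvg : e @ \oo --> 0.
  have -> : e = GRing.exp D^-1 by apply/funext => n; rewrite /e exprVn.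
  by apply: cvg_expr; rewrite gtr0_norm ?invf_lt1 ?invr_gt0; lra.
have -> : (fun n => e n * L n) = (fun n => e n * (L n - C) + C * e n).
  by apply/funext => n; ring.
rewrite (cvg_lim _ (cvgD lo_cvg (cvgMl_tmp (a := C) e_cvg))) // mulr0 addr0.
by have := nondecreasing_cvgn_le lo_nd lo_cvg 0%N; rewrite /e expr0 invr1 mul1r.
Qed.

End ScaledLimit.

Section SupNorm.
Variables (R : realType) (k : nat).
Implicit Types z w : 'rV[R[i]]_k.

Lemma coord_ord w (i : 'I_k) : coord w i = w 0 i.
Proof. by rewrite /Defs.coord valK. Qed.

Lemma supnorm_ge0 w : 0 <= supnorm w.
Proof. by apply: bigmax_ge_id. Qed.

Lemma cabs_le_supnorm w i : cabs (w 0 i) <= supnorm w.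
Proof. exact: le_bigmax. Qed.

Lemma cabs_coord_le_supnorm w p : cabs (coord w p) <= supnorm w.
Proof.
have [pk|kp] := ltnP p k; first by rewrite -[p]/(val (Ordinal pk)) coord_ord cabs_le_supnorm.
by rewrite /coord insubF ?ltnNge ?kp // /cabs Normc.normc0 supnorm_ge0.
Qed.

Lemma supnorm_le w (M : R) : 0 <= M -> (forall i, cabs (w 0 i) <= M) -> supnorm w <= M.
Proof. by move=> M0 wM; apply: bigmax_le. Qed.

Lemma supnorm_attained w : (0 < k)%N -> exists i, supnorm w = cabs (w 0 i).
Proof.
move=> k0; rewrite /supnorm.
have [i _ ->] := @eq_bigmax _ _ _ _ (Ordinal k0) xpredT _ erefl (fun i _ => cabs_ge0 (w 0 i)).
by exists i.
Qed.

Lemma VRplus_tail_max w nu (r : R) (p : 'I_k) :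
  (k - nu <= p)%N -> r <= cabs (w 0 p) ->
  (forall q : 'I_k, (q < k - nu)%N -> cabs (w 0 q) <= cabs (w 0 p)) ->
  VRplus nu r w.
Proof.
move=> p_tail rp head_le.
have [j wj] := supnorm_attained w (leq_ltn_trans (leq0n p) (ltn_ord p)).
have [j_head|j_tail] := ltnP j (k - nu).
  exists p; split=> //; split=> //.
  by apply/le_anti; rewrite cabs_le_supnorm wj head_le.
exists j; split=> //; split=> //.
by rewrite -wj (le_trans rp (cabs_le_supnorm _ _)).
Qed.

End SupNorm.

Section ShiftLike.
Variables (R : realType) (k nu d : nat) (delta : R[i]).
Hypotheses (nu_gt0 : (0 < nu)%N) (nu_lt_k : (nu < k)%N).
Implicit Types z w : 'rV[R[i]]_k.

Local Notation S := (shift_like nu d delta).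
Local Notation T := (iter nu S).

Lemma coord_shift_like w p : (p < k)%N ->
  coord (S w) p = if (p.+1 < k)%N then coord w p.+1
                  else delta * (coord w (k - nu) ^+ d - coord w 0).
Proof. by move=> pk; rewrite -[p]/(val (Ordinal pk)) coord_ord mxE. Qed.

Lemma coord_iter_shift_like w q p : (q <= nu)%N -> (p < k)%N ->
  coord (iter q S w) p =
  if (p + q < k)%N then coord w (p + q)
  else delta * (coord w (p + q - nu) ^+ d - coord w (p + q - k)).
Proof.
elim: q p => [|q IH] p qnu pk; first by rewrite addn0 pk.
rewrite iterS coord_shift_like //; case: ifP => [pk'|pk'].
  by rewrite IH ?addSnnS //; lia.
rewrite !IH; try lia.
have -> : (k - nu + q < k)%N by lia.
have -> : (0 + q < k)%N by lia.
have -> : (p + q.+1 < k)%N = false by lia.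
by congr (_ * (coord w _ ^+ d - coord w _)); lia.
Qed.

Lemma shift_nu_entry w (i : 'I_k) :
  T w 0 i = if (i + nu < k)%N then coord w (i + nu)
            else delta * (w 0 i ^+ d - coord w (i + nu - k)).
Proof. by rewrite -coord_ord coord_iter_shift_like // addnK coord_ord. Qed.

Hypothesis d_ge2 : (2 <= d)%N.
Local Notation m := (cabs delta).

Lemma sqr_le_expr (M : R) : 1 <= M -> M * M <= M ^+ d.
Proof. by move=> M1; rewrite -expr2 ler_weXn2l. Qed.

Lemma shift_nu_head_le w (i : 'I_k) : (i + nu < k)%N -> cabs (T w 0 i) <= supnorm w.
Proof. by move=> head; rewrite shift_nu_entry head cabs_coord_le_supnorm. Qed.

Lemma shift_nu_tail_le w (i : 'I_k) : (k <= i + nu)%N ->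
  cabs (T w 0 i) <= m * (supnorm w ^+ d + supnorm w).
Proof.
move=> tail; rewrite shift_nu_entry ltnNge tail /= cabsM.
apply: ler_wpM2l; first exact: cabs_ge0.
apply: le_trans (cabsB_le _ _) _; rewrite cabsX lerD ?cabs_coord_le_supnorm //.
by rewrite lerXn2r ?nnegrE ?cabs_ge0 ?supnorm_ge0 ?cabs_le_supnorm.
Qed.

Lemma shift_nu_tail_ge w (i : 'I_k) : (k - nu <= i)%N ->
  supnorm w = cabs (w 0 i) -> 2 <= supnorm w ->
  m * supnorm w ^+ d / 2 <= cabs (T w 0 i).
Proof.
move=> tail wi M2; have := sqr_le_expr (le_trans (ler1n _ 2) M2).
set M := supnorm w in wi M2 * => MMd; rewrite shift_nu_entry.
have /negbTE -> : ~~ (i + nu < k)%N by rewrite -leqNgt; lia.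
rewrite cabsM -mulrA; apply: ler_wpM2l; first exact: cabs_ge0.
apply: le_trans (cabsB_ge _ _); rewrite cabsX -wi.
have := cabs_coord_le_supnorm w (i + nu - k); rewrite -/M; nra.
Qed.

Lemma supnorm_shift_nu_le w : 1 <= supnorm w ->
  supnorm (T w) <= (1 + 2 * m) * supnorm w ^+ d.
Proof.
move=> M1; have Md : supnorm w <= supnorm w ^+ d by apply: ler_eXnr => //; lia.
have m0 := cabs_ge0 delta; have Md0 : 0 <= supnorm w ^+ d by apply: exprn_ge0; lra.
apply: supnorm_le => [|i]; first by apply: mulr_ge0; lra.
have [head|tail] := ltnP (i + nu) k.
  by apply: le_trans (shift_nu_head_le _ head) _; nra.
by apply: le_trans (shift_nu_tail_le _ tail) _; nra.
Qed.

Lemma VRplus_shift_nu (r : R) w : 2 <= r -> 2 <= m * r ->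
  VRplus nu r w -> VRplus nu r (T w).
Proof.
move=> r2 mr [i [tail [wi ri]]]; rewrite -wi in ri.
have i_lo := shift_nu_tail_ge tail wi (le_trans r2 ri).
have MMd := sqr_le_expr (le_trans (ler1n _ 2) (le_trans r2 ri)).
have M_le : supnorm w <= cabs (T w 0 i).
  apply: le_trans i_lo; have := cabs_ge0 delta; nra.
apply: (VRplus_tail_max tail); first exact: le_trans M_le.
by move=> q head; apply: le_trans M_le; apply: shift_nu_head_le; lia.
Qed.

Lemma supnorm_shift_nu_ge (r : R) w : 2 <= r -> VRplus nu r w ->
  m * supnorm w ^+ d / 2 <= supnorm (T w).
Proof.
move=> r2 [i [tail [wi ri]]].
by rewrite (le_trans (shift_nu_tail_ge tail wi _) (cabs_le_supnorm _ _)) // wi (le_trans r2).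
Qed.

Lemma ln_supnorm_shift_nu_le (r : R) w : 2 <= r -> 2 <= m * r -> VRplus nu r w ->
  `|ln (supnorm (T w)) - d%:R * ln (supnorm w)|
    <= `|ln (m / 2)| + `|ln (1 + 2 * m)|.
Proof.
move=> r2 mr wV; have [i [_ [wi ri]]] := wV; rewrite -wi in ri.
have M0 : 0 < supnorm w by apply: lt_le_trans ri; lra.
have m0 : 0 < m by rewrite -(@pmulr_lgt0 _ r) //; lra.
rewrite mulr_natl -lnXn //; apply: normr_lnB_le; rewrite ?divr_gt0 ?exprn_gt0 //.
rewrite supnorm_shift_nu_le ?andbT; last by apply: le_trans ri; lra.
by rewrite mulrAC (supnorm_shift_nu_ge r2 wV).
Qed.

Lemma Gplus_iter z : (forall n, 1 <= supnorm (iter n T z)) ->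
  Gplus nu d delta z = limn (fun n => (d%:R ^+ n)^-1 * ln (supnorm (iter n T z))).
Proof.
move=> z1; rewrite /Gplus; congr (lim (_ @ \oo)); apply/funext => n.
by rewrite mulnC iterM /logplus; congr (_ * _); apply/max_idPl; exact: ln_ge0.
Qed.

End ShiftLike.

Theorem proposition4p3 (R : realType) (k nu d : nat) (delta : R[i]) :
  (2 <= k)%N -> (1 <= nu <= k - 1)%N -> (2 <= d)%N -> delta != 0 ->
  forall c : R, 0 < c ->
  exists r : R, 0 < r /\
    forall z : 'rV[R[i]]_k, VRplus nu r z -> c <= Gplus nu d delta z.
Proof.
move=> k2 /andP[nu_gt0 nu_le] d2 delta0 c c0.
have nu_lt_k : (nu < k)%N by lia.
have d_gt1 : 1 < d%:R :> R by rewrite ltr1n.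
pose T := iter nu (@shift_like R k nu d delta).
set m := cabs delta; have m0 : 0 < m := cabs_gt0 delta0.
set C := (`|ln (m / 2)| + `|ln (1 + 2 * m)|) / (d%:R - 1).
set r := Num.max (Num.max 2 (2 / m)) (expR (c + C)).
have r2 : 2 <= r by rewrite !le_max lexx.
have mr : 2 <= m * r by rewrite mulrC -ler_pdivrMr // !le_max lexx orbT.
exists r; split; first lra.
move=> z zV.
have orbit n : VRplus nu r (iter n T z) by elim: n => //= n IH; exact: VRplus_shift_nu.
have big n : r <= supnorm (iter n T z) by have [i [_ [-> ]]] := orbit n.
rewrite Gplus_iter //; last by move=> n; apply: le_trans (big n); lra.
apply: le_trans (limn_scaled_ge d_gt1 _); last first.
  by move=> n; rewrite iterS; exact: ln_supnorm_shift_nu_le (orbit n).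
have : expR (c + C) <= supnorm z by apply: le_trans (big 0%N); rewrite le_max lexx orbT.
rewrite -ler_ln ?posrE ?expR_gt0 ?expRK //=; last by apply: lt_le_trans (big 0%N); lra.
by rewrite -/m -/C; lra.
Qed.
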